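(* Let $(\Sigma,E)$ be an algebraic theory with free monad $(T,\eta,\mu)$, let $(X,I)$ be a $(\Sigma^{\mathrm{s}},E^{\mathrm{s}})$-algebra, and let $\alpha:TX\to X$ be defined by $\alpha(\overline{t})=I(t)_{I(\mathsf{a})}$. Then $\alpha$ is a $T$-semialgebra, i.e. $\alpha\circ\mu_X=\alpha\circ T\alpha$.
   Context: $T=T_{\Sigma,E}$: $TX$ is the set of $\Sigma$-terms over $X$ modulo the smallest congruence containing all substitution instances of $E$, with $\eta_X(x)=\overline{x}$, $\mu_X$ flattening terms ($\overline{t[\overline{t_i}/v_i]}\mapsto\overline{t[t_i/v_i]}$), and $Tf$ applying $f$ to variables. For a $\Sigma^{\mathrm{s}}$-algebra $(X,I)$, $I(t)_{I(\mathsf{a})}$ is the value of the $\Sigma$-term $t$ over $X$ obtained by sending each element $x$ occurring as a variable to $I(\mathsf{a})(x)$ and interpreting operations via $I$ (independent of the representative $t$). The theory $(\Sigma^{\mathrm{s}},E^{\mathrm{s}})$: $\Sigma^{\mathrm{s}}=\Sigma\uplus\{\mathsf{a}:1\}$ and $E^{\mathrm{s}}$ consists of $\mathsf{a}\mathsf{a}v_1=\mathsf{a}v_1$; $\mathsf{a}(\mathsf{op}(v_1,\dots,v_n))=\mathsf{op}(v_1,\dots,v_n)$ and $\mathsf{op}(\mathsf{a}v_1,\dots,\mathsf{a}v_n)=\mathsf{op}(v_1,\dots,v_n)$ for every $(\mathsf{op}:n)\in\Sigma$; and $t(\mathsf{a}v_1,\dots,\mathsf{a}v_n)=s(\mathsf{a}v_1,\dots,\mathsf{a}v_n)$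 for every equation $t=s$ in $E$. *)

From mathcomp Require Import all_boot.
Set Implicit Arguments.
Unset Strict Implicit.
Unset Printing Implicit Defensive.

Record signature := Signature { sym :> Type; arity : sym -> nat }.

Inductive term (S : signature) (V : Type) : Type :=
| Var : V -> term S V
| Op : forall o : S, ('I_(arity o) -> term S V) -> term S V.
Arguments Var {S V} _.
Arguments Op {S V} o _.

Definition equations (S : signature) := term S nat -> term S nat -> Prop.

Record algebra (S : signature) := Algebra {
  carrier :> Type;
  interp : forall o : S, ('I_(arity o) -> carrier) -> carrier }.
Arguments interp {S} _ o _.

Fixpoint eval (S : signature) (A : algebra S) (V : Type) (rho : V -> A)
    (t : term S V) : A :=
  match t with
  | Var v => rho v
  | Op o ts => interp A o (fun i => eval rho (ts i))
  end.

Definition satisfies (S : signature) (A : algebra S) (E : equations S) : Prop :=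
  forall t s, E t s -> forall rho : nat -> A, eval rho t = eval rho s.

(* Functor T on representatives: map on variables, and monad multiplication (flattening). *)
Fixpoint tmap (S : signature) (V W : Type) (f : V -> W) (t : term S V) : term S W :=
  match t with
  | Var v => Var (f v)
  | Op o ts => Op o (fun i => tmap f (ts i))
  end.

Fixpoint tbind (S : signature) (V W : Type) (f : V -> term S W) (t : term S V)
    : term S W :=
  match t with
  | Var v => f v
  | Op o ts => Op o (fun i => tbind f (ts i))
  end.

Definition tflatten (S : signature) (V : Type) (t : term S (term S V)) : term S V :=
  tbind id t.

(* The signature Sigma^s = Sigma + {a : 1}; [None] is the new unary symbol a. *)
Definition sig_s (S : signature) : signature :=
  Signature (fun o : option S => match o with None => 1%N | Some o => arity o end).

Definition embed (S : signature) (V : Type) : term S V -> term (sig_s S) V :=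
  fix emb t := match t with
  | Var v => Var v
  | Op o ts => @Op (sig_s S) V (Some o) (fun i => emb (ts i))
  end.

Definition aT (S : signature) (V : Type) (u : term (sig_s S) V) : term (sig_s S) V :=
  @Op (sig_s S) V None (fun _ => u).

Inductive E_s (S : signature) (E : equations S) :
    term (sig_s S) nat -> term (sig_s S) nat -> Prop :=
| Es_idem : E_s E (aT (aT (Var 0%N))) (aT (Var 0%N))
| Es_absorb_out : forall o : S,
    E_s E (aT (@Op (sig_s S) nat (Some o) (fun i => Var (nat_of_ord i))))
          (@Op (sig_s S) nat (Some o) (fun i => Var (nat_of_ord i)))
| Es_absorb_in : forall o : S,
    E_s E (@Op (sig_s S) nat (Some o) (fun i => aT (Var (nat_of_ord i))))
          (@Op (sig_s S) nat (Some o) (fun i => Var (nat_of_ord i)))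
| Es_lift : forall t s, E t s ->
    E_s E (tbind (fun v => aT (Var v)) (embed t))
          (tbind (fun v => aT (Var v)) (embed s)).

Definition Ia (S : signature) (A : algebra (sig_s S)) (x : A) : A :=
  interp A None (fun _ => x).

Definition alpha (S : signature) (A : algebra (sig_s S)) (t : term S A) : A :=
  eval (@Ia S A) (embed t).
Arguments alpha {S} A t.

(* Every value of [alpha] is a fixed point of I(a): for a variable this is the
   equation a a v = a v, for an operation it is a op(v_1, ..., v_n) = op(v_1, ..., v_n).
   Both sides of the semialgebra law evaluate the same Sigma-term [t] over
   T X, with variables sent to [alpha] and to [I(a) o alpha] respectively, so
   they agree. *)
From Stdlib Require Import FunctionalExtensionality.
From mathcomp Require Import all_boot.

Set Implicit Arguments.
Unset Strict Implicit.

Section Substitution.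

Variable S : signature.

Lemma embed_tbind (V W : Type) (f : V -> term S W) (t : term S V) :
  embed (tbind f t) = tbind (fun v => embed (f v)) (embed t).
Proof.
elim: t => [v|o ts IH] //=.
by congr Op; apply: functional_extensionality.
Qed.

Lemma embed_tmap (V W : Type) (f : V -> W) (t : term S V) :
  embed (tmap f t) = tmap f (embed t).
Proof.
elim: t => [v|o ts IH] //=.
by congr Op; apply: functional_extensionality.
Qed.

Variable A : algebra S.

Lemma eval_tbind (V W : Type) (rho : W -> A) (f : V -> term S W) (t : term S V) :
  eval rho (tbind f t) = eval (fun v => eval rho (f v)) t.
Proof.
elim: t => [v|o ts IH] //=.
by congr interp; apply: functional_extensionality.
Qed.

Lemma eval_tmap (V W : Type) (rho : W -> A) (f : V -> W) (t : term S V) :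
  eval rho (tmap f t) = eval (fun v => rho (f v)) t.
Proof.
elim: t => [v|o ts IH] //=.
by congr interp; apply: functional_extensionality.
Qed.

End Substitution.

Section SemialgebraLaw.

Variables (S : signature) (E : equations S) (A : algebra (sig_s S)).
Hypothesis HA : satisfies A (E_s E).

Lemma Ia_idem (x : A) : Ia (Ia x) = Ia x.
Proof. exact: HA (Es_idem E) (fun _ => x). Qed.

Lemma Ia_interp (o : S) (xs : 'I_(arity o) -> A) :
  Ia (interp A (Some o) xs) = interp A (Some o) xs.
Proof.
pose rho n := if insub n is Some i then xs i else interp A (Some o) xs.
have rhoE : (fun i : 'I_(arity o) => rho (nat_of_ord i)) = xs.
  by apply: functional_extensionality => i; rewrite /rho valK.
by have := HA (Es_absorb_out E o) rho; rewrite /= rhoE.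
Qed.

Lemma Ia_alpha (u : term S A) : Ia (alpha A u) = alpha A u.
Proof. by case: u => [x|o us]; [apply: Ia_idem | apply: Ia_interp]. Qed.

End SemialgebraLaw.

Theorem lemma14 (S : signature) (E : equations S) (A : algebra (sig_s S))
  (HA : satisfies A (E_s E)) (t : term S (term S A)) :
  alpha A (tflatten t) = alpha A (tmap (alpha A) t).
Proof.
rewrite /alpha /tflatten embed_tbind eval_tbind embed_tmap eval_tmap.
by congr eval; apply: functional_extensionality => u; rewrite (Ia_alpha HA).
Qed.
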